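(* Assume $N\ge K_R$. With the definitions in the context, the value of the optimization problem (P3), i.e. $$\min_{\text{caching realizations}}\ \frac{1}{\pi(N,K_R)}\sum_{\mathbf{d}\in\mathcal{P}_{N,K_R}}H^*\!\left(\{\mathcal{P}_i\}_{i=1}^{K_T},\{\mathcal{Q}_j\}_{j=1}^{K_R},\mathbf{d}\right),$$ the minimum being over caching realizations satisfying the constraints below, is bounded from below by $$\frac{K_R\,N\,F\left(1-\frac{M_R}{N}\right)^2}{K_TM_T+K_RM_R}.$$
   Context: Setting: $K_T$ transmitters, $K_R$ receivers, a library of $N$ files $W_1,\dots,W_N$, each consisting of $F$ packets. A caching realization consists of sets $\mathcal{P}_i$ ($i\in[K_T]$) of packets cached at transmitter $\text{Tx}_i$ and $\mathcal{Q}_j$ ($j\in[K_R]$) of packets cached at receiver $\text{Rx}_j$. For a nonempty $\mathcal{T}\subseteq[K_T]$ and $\mathcal{R}\subseteq[K_R]$, let $a_{n,\mathcal{T},\mathcal{R}}$ be the number of packets of $W_n$ cached exactly at the transmitters in $\mathcal{T}$ and the receivers in $\mathcal{R}$. The constraints on the caching realization are: $\sum_{\emptyset\ne\mathcal{T}\subseteq[K_T]}\sum_{\mathcal{R}\subseteq[K_R]}a_{n,\mathcal{T},\mathcal{R}}=F$ for all $n$ (every packet is cached by at least one transmitter); $\sum_{n}\sum_{\mathcal{R}}\sum_{\mathcal{T}\ni i}a_{n,\mathcal{T},\mathcal{R}}\le M_TF$ for all $i\in[K_T]$; $\sum_n\sum_{\emptyset\ne\mathcal{T}}\sum_{\mathcal{R}\ni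 j}a_{n,\mathcal{T},\mathcal{R}}\le M_RF$ for all $j\in[K_R]$; $a_{n,\mathcal{T},\mathcal{R}}\ge0$. Feasibility: a set $\mathcal{D}$ of $L$ requested packets, to be sent in one block to $L$ distinct receivers, is feasible if $L\le\min_{l}(|\mathcal{T}_l|+|\mathcal{R}_l|)$, where $\mathcal{T}_l,\mathcal{R}_l$ are the sets of transmitters and receivers caching the $l$-th packet. (P1): for a caching realization and a demand vector $\mathbf{d}=(d_1,\dots,d_{K_R})$ (receiver $\text{Rx}_j$ requests $W_{d_j}$), $H^*(\{\mathcal{P}_i\},\{\mathcal{Q}_j\},\mathbf{d})$ is the minimum $H$ such that there exist feasible sets $\mathcal{D}_1,\dots,\mathcal{D}_H$ with $\bigcup_{m=1}^H\mathcal{D}_m=\bigcup_{j=1}^{K_R}(W_{d_j}\setminus\mathcal{Q}_j)$. $\mathcal{P}_{N,K_R}$ is the set of demand vectors with pairwise distinct entries, of cardinality $\pi(N,K_R)=\frac{N!}{(N-K_R)!}$. *)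

From HB Require Import structures.
From mathcomp Require Import all_boot all_order all_algebra.
From Stdlib Require Import ClassicalEpsilon.
Set Implicit Arguments. Unset Strict Implicit. Unset Printing Implicit Defensive.
Import Order.TTheory GRing.Theory Num.Theory.

Section Model.
Variables (KT KR N F : nat).

(* a packet of the library: (file index n, packet index within the file) *)
Definition packet := ('I_N * 'I_F)%type.
(* a request: a packet together with the receiver it is to be delivered to *)
Definition request := (packet * 'I_KR)%type.

(* a caching realization: P i = packets cached at Tx_i, Q j = packets cached at Rx_j;
   a demand vector d : receiver Rx_j requests file W_(d j) *)
Variables (P : 'I_KT -> {set packet}) (Q : 'I_KR -> {set packet}).

Definition Tx_of (p : packet) : {set 'I_KT} := [set i | p \in P i].
Definition Rx_of (p : packet) : {set 'I_KR} := [set j | p \in Q j].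

(* all (packet, receiver) pairs still to be delivered:
   \bigcup_j (W_(d_j) \ Q_j), each packet tagged with its requesting receiver *)
Definition requests (d : {ffun 'I_KR -> 'I_N}) : {set request} :=
  [set x : request | (x.1.1 == d x.2) && (x.1 \notin Q x.2)].

Definition feasible (D : {set request}) : bool :=
  [forall x in D, forall y in D, (x.2 == y.2) ==> (x == y)] &&
  [forall x in D, #|D| <= #|Tx_of x.1| + #|Rx_of x.1|].

Definition coverable (d : {ffun 'I_KR -> 'I_N}) (H : nat) : bool :=
  [exists Ds : {ffun 'I_H -> {set request}},
     [forall m, feasible (Ds m)] && (\bigcup_(m < H) Ds m == requests d)].

(* H^*(P, Q, d): the minimum such H (0 by convention if no H exists, which
   cannot happen for a valid caching realization) *)
Definition Hstar (d : {ffun 'I_KR -> 'I_N}) : nat :=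
  match excluded_middle_informative (exists H, coverable d H) with
  | left e => ex_minn e
  | right _ => 0%N
  end.

Definition valid_caching (R : numDomainType) (MT MR : R) : Prop :=
  (forall p : packet, exists i, p \in P i) /\
  (forall i, (#|P i|%:R <= MT * F%:R)%R) /\
  (forall j, (#|Q j|%:R <= MR * F%:R)%R).

End Model.

Definition distinct_demands (KR N : nat) : {set {ffun 'I_KR -> 'I_N}} :=
  [set d : {ffun 'I_KR -> 'I_N} | injectiveb (fun i => d i)].

Definition perm_count (N KR : nat) : nat := N`! %/ (N - KR)`!.

(** Give each packet [p] the weight [1 / (|T_p| + |R_p|)]. A feasible block
    of [L] packets contains only packets of weight at most [1/L], so its total
    weight is at most one and [H^*(d)] is at least the total weight of the
    requests of [d]. Averaged over the distinct demand vectors, receiver [j]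
    requests a given file in a [1/N] fraction of them, so the average is
    [(1/N) sum_p (K_R - r_p) / (t_p + r_p)] with [t_p = |T_p|], [r_p = |R_p|].
    The cache sizes bound [sum_p t_p] and [sum_p r_p], and the tangent-line
    inequality [a / b >= 2 l a - l^2 a b] (optimised in [l]) turns these bounds
    into the claimed lower bound. *)
From HB Require Import structures.
From mathcomp Require Import all_boot all_order all_algebra all_fingroup.
From mathcomp Require Import ring.
From Stdlib Require Import ClassicalEpsilon.
Import Order.TTheory GRing.Theory Num.Theory.
Local Open Scope ring_scope.
Set Implicit Arguments. Unset Strict Implicit.

Section SumRatio.
Variable R : realFieldType.

Lemma tangent_le_ratio (a b l : R) : 0 <= a -> 0 < b ->
  2 * l * a - l ^+ 2 * (a * b) <= a / b.
Proof.
move=> a0 b0; rewrite -subr_ge0.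
rewrite (_ : _ - _ = a / b * (1 - l * b) ^+ 2); last by field; rewrite gt_eqF.
exact: mulr_ge0 (divr_ge0 a0 (ltW b0)) (sqr_ge0 _).
Qed.

Lemma sqr_div_le_sum_ratio (T : finType) (a b : T -> R) (A B : R) :
  (forall x, 0 <= a x) -> (forall x, 0 < b x) ->
  0 <= A -> A <= \sum_x a x -> \sum_x a x * b x <= B ->
  A ^+ 2 / B <= \sum_x a x / b x.
Proof.
move=> a0 b0 A0 leA leB.
have [->|Bnz] := eqVneq B 0.
  by rewrite invr0 mulr0 sumr_ge0 // => x _; exact: divr_ge0 (a0 x) (ltW (b0 x)).
pose l := A / B.
have l0 : 0 <= l.
  apply: divr_ge0 => //; apply: le_trans leB; apply: sumr_ge0 => x _.
  exact: mulr_ge0 (a0 x) (ltW (b0 x)).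
have -> : A ^+ 2 / B = 2 * l * A - l ^+ 2 * B by rewrite /l; field; exact: Bnz.
apply: le_trans (_ : _ <= 2 * l * \sum_x a x - l ^+ 2 * \sum_x a x * b x) _.
  apply: lerB; apply: ler_wpM2l => //; last exact: sqr_ge0.
  exact: mulr_ge0.
rewrite !mulr_sumr -sumrB; apply: ler_sum => x _.
exact: tangent_le_ratio.
Qed.

Lemma ler_sum_bigcup (I T : finType) (D : I -> {set T}) (f : T -> R) :
  (forall x, 0 <= f x) ->
  \sum_(x in \bigcup_i D i) f x <= \sum_i \sum_(x in D i) f x.
Proof.
move=> f0; pose g x i := if x \in D i then f x else 0.
have g0 x i : 0 <= g x i by rewrite /g; case: ifP.
apply: le_trans (_ : _ <= \sum_x \sum_i g x i) _.
  rewrite [leRHS](bigID [in \bigcup_i D i]) /= -[leLHS]addr0.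
  apply: lerD; last by apply: sumr_ge0 => x _; exact: sumr_ge0.
  apply: ler_sum => x /bigcupP [i _ xDi].
  by rewrite (bigD1 i) //= {1}/g xDi lerDl; exact: sumr_ge0.
by rewrite exchange_big; apply: ler_sum => i _; rewrite [leRHS]big_mkcond.
Qed.

Lemma sum_card_sets_containing_le (I T : finType) (A : I -> {set T}) (c : R) :
  (forall i, #|A i|%:R <= c) ->
  \sum_x #|[set i | x \in A i]|%:R <= #|I|%:R * c.
Proof.
move=> leAc.
have -> : \sum_x #|[set i | x \in A i]|%:R = \sum_i #|A i|%:R :> R.
  rewrite -!natr_sum; congr (_%:R).
  under eq_bigr do rewrite -sum1dep_card big_mkcond /=.
  rewrite exchange_big; apply: eq_bigr => i _.
  by rewrite -big_mkcond sum1dep_card; apply: eq_card => x; rewrite inE.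
by rewrite mulr_natl -sumr_const; apply: ler_sum.
Qed.

End SumRatio.

Section DistinctDemands.
Variables KR N : nat.
Local Notation D := (distinct_demands KR N).

Lemma card_distinct_demands : (KR <= N)%N -> #|D| = perm_count N KR.
Proof. by move=> leKN; rewrite card_inj_ffuns !card_ord ffact_factd. Qed.

Lemma card_distinct_demands_at_le (j : 'I_KR) (n n' : 'I_N) :
  (#|[set d in D | d j == n]| <= #|[set d in D | d j == n']|)%N.
Proof.
pose swap (d : {ffun 'I_KR -> 'I_N}) := [ffun i => tperm n n' (d i)].
have swap_inj : injective swap.
  move=> d1 d2 /ffunP eq12; apply/ffunP => i.
  by have := eq12 i; rewrite !ffunE => /(can_inj (tpermK n n')).
rewrite -(card_imset _ swap_inj); apply: subset_leq_card.
apply/subsetP => _ /imsetP [d + ->]; rewrite !inE => /andP[d_inj /eqP dj].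
rewrite ffunE dj tpermL eqxx andbT; apply/injectiveP => i1 i2.
by rewrite !ffunE => /(can_inj (tpermK n n')); apply/injectiveP.
Qed.

Lemma card_distinct_demands_at (j : 'I_KR) (n : 'I_N) :
  (#|[set d in D | d j == n]| * N)%N = #|D|.
Proof.
apply/esym; rewrite -sum1_card.
rewrite (partition_big (fun d : {ffun 'I_KR -> 'I_N} => d j) predT) //=.
rewrite (eq_bigr (fun _ => #|[set d in D | d j == n]|)) => [|n' _].
  by rewrite sum_nat_const card_ord mulnC.
by rewrite sum1dep_card; apply/eqP; rewrite eqn_leq !card_distinct_demands_at_le.
Qed.

Lemma sum_requests_distinct_demands (R : realFieldType) (F : nat)
    (Q : 'I_KR -> {set packet N F}) (f : packet N F -> R) :
  \sum_(d in D) \sum_(x in requests Q d) f x.1 =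
  #|D|%:R / N%:R * \sum_p #|~: Rx_of Q p|%:R * f p.
Proof.
set c := #|D|%:R / N%:R.
transitivity (\sum_(x : request KR N F) if x.1 \notin Q x.2 then c * f x.1 else 0).
  under eq_bigr do rewrite big_mkcond /=.
  rewrite exchange_big /=; apply: eq_bigr => x _; rewrite -big_mkcondr /=.
  case: ifP => [xQ|xQ]; last by apply: big1 => d /andP[_]; rewrite inE xQ andbF.
  rewrite (eq_bigl [in [set d in D | d x.2 == x.1.1]]) => [|d]; last first.
    by rewrite !inE xQ andbT eq_sym.
  rewrite sumr_const -mulr_natl; apply: (congr1 (fun r => r * f x.1)).
  have Nnz : N%:R != 0 :> R by rewrite pnatr_eq0 -lt0n (leq_ltn_trans _ (ltn_ord x.1.1)).
  by rewrite /c -(card_distinct_demands_at x.2 x.1.1) natrM mulfK.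
rewrite -(pair_bigA _ (fun p j => if p \notin Q j then c * f p else 0)) mulr_sumr.
apply: eq_bigr => p _; rewrite -big_mkcond sumr_const [RHS]mulrCA mulr_natl.
by congr (_ *+ _); apply: eq_card => j; rewrite !inE.
Qed.

End DistinctDemands.

Section PacketWeight.
Variables (R : realFieldType) (KT KR N F : nat).
Variables (P : 'I_KT -> {set packet N F}) (Q : 'I_KR -> {set packet N F}).

Definition packet_weight (p : packet N F) : R :=
  (#|Tx_of P p| + #|Rx_of Q p|)%:R^-1.

Lemma packet_weight_ge0 p : 0 <= packet_weight p.
Proof. by rewrite invr_ge0 ler0n. Qed.

Lemma feasible_weight_le1 (D : {set request KR N F}) :
  feasible P Q D -> \sum_(x in D) packet_weight x.1 <= 1.
Proof.
case/andP=> _ /forallP D_small.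
have [->|D0] := eqVneq D set0; first by rewrite big_set0 ler01.
have cardD0 : (0 < #|D|)%N by rewrite card_gt0.
apply: le_trans (_ : _ <= \sum_(x in D) #|D|%:R^-1) _.
  apply: ler_sum => x xD; have := D_small x; rewrite xD /= => lex.
  by rewrite lef_pV2 ?posrE ?ltr0n ?ler_nat // (leq_trans cardD0).
by rewrite sumr_const -(mulr_natr (#|D|%:R^-1)) mulVf // pnatr_eq0 -lt0n.
Qed.

Hypothesis P_cover : forall p : packet N F, exists i, p \in P i.

Lemma card_Tx_gt0 p : (0 < #|Tx_of P p|)%N.
Proof. by have [i pi] := P_cover p; apply/card_gt0P; exists i; rewrite inE. Qed.

Lemma coverable_card_requests d : coverable P Q d #|requests Q d|.
Proof.
apply/existsP; exists [ffun m => [set enum_val m]]; apply/andP; split.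
  apply/forallP => m; rewrite ffunE; apply/andP; split.
    by apply/forall_inP => x /set1P ->; apply/forall_inP => y /set1P ->; rewrite !eqxx.
  apply/forall_inP => x _.
  by rewrite cards1 (leq_trans (card_Tx_gt0 x.1)) ?leq_addr.
apply/eqP/setP => x; apply/bigcupP/idP.
  by case=> m _; rewrite ffunE => /set1P ->; exact: enum_valP.
by move=> xr; exists (enum_rank_in xr x); rewrite // ffunE enum_rankK_in ?set11.
Qed.

Lemma coverable_Hstar d : coverable P Q d (Hstar P Q d).
Proof.
rewrite /Hstar; case: excluded_middle_informative => [e|[]].
  by case: ex_minnP.
by exists #|requests Q d|; exact: coverable_card_requests.
Qed.

Lemma requests_weight_le_Hstar d :
  \sum_(x in requests Q d) packet_weight x.1 <= (Hstar P Q d)%:R.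
Proof.
case/existsP: (coverable_Hstar d) => Ds /andP[/forallP Ds_feas /eqP <-].
apply: le_trans (ler_sum_bigcup _ (fun x => packet_weight_ge0 x.1)) _.
apply: le_trans (_ : _ <= \sum_(m < Hstar P Q d) 1) _.
  by apply: ler_sum => m _; exact: feasible_weight_le1.
by rewrite sumr_const card_ord.
Qed.

Lemma sum_weighted_complement_ge (MT MR : R) :
  (0 < KR)%N -> (0 < F)%N -> 0 <= MR -> MR <= N%:R ->
  valid_caching P Q MT MR ->
  KR%:R * F%:R * (N%:R - MR) ^+ 2 / (KT%:R * MT + KR%:R * MR) <=
  \sum_p #|~: Rx_of Q p|%:R * packet_weight p.
Proof.
move=> KR0 F0 MR0 MRN [_ [P_size Q_size]].
have sumT : \sum_p #|Tx_of P p|%:R <= KT%:R * (MT * F%:R).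
  by have := sum_card_sets_containing_le P_size; rewrite card_ord.
have sumR : \sum_p #|Rx_of Q p|%:R <= KR%:R * (MR * F%:R).
  by have := sum_card_sets_containing_le Q_size; rewrite card_ord.
have card_compl p : #|~: Rx_of Q p|%:R = KR%:R - #|Rx_of Q p|%:R :> R.
  by apply/eqP; rewrite eq_sym subr_eq -natrD addnC cardsC card_ord.
set S := KT%:R * MT + KR%:R * MR.
have -> : KR%:R * F%:R * (N%:R - MR) ^+ 2 / S =
          (KR%:R * F%:R * (N%:R - MR)) ^+ 2 / (KR%:R * F%:R * S).
  have [->|Snz] := eqVneq S 0; first by rewrite mulr0 !invr0 !mulr0.
  by field; rewrite Snz !pnatr_eq0 -!lt0n KR0 F0.
apply: (@sqr_div_le_sum_ratio _ _ (fun p => #|~: Rx_of Q p|%:R)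
                                  (fun p => (#|Tx_of P p| + #|Rx_of Q p|)%:R)).
- by move=> p; exact: ler0n.
- by move=> p; rewrite ltr0n addn_gt0 card_Tx_gt0.
- by apply: mulr_ge0; [apply: mulr_ge0 | rewrite subr_ge0].
- under eq_bigr do rewrite card_compl.
  rewrite sumrB sumr_const (_ : #|_| = N * F)%N; last by rewrite card_prod !card_ord.
  rewrite -(mulr_natr KR%:R) natrM.
  rewrite (_ : _ * _ * _ = KR%:R * (N%:R * F%:R) - KR%:R * (MR * F%:R)); last by ring.
  exact: lerB.
- apply: le_trans (_ : _ <= KR%:R * (\sum_p #|Tx_of P p|%:R + \sum_p #|Rx_of Q p|%:R)) _.
    rewrite -big_split mulr_sumr; apply: ler_sum => p _; rewrite natrD.
    apply: ler_wpM2r; first exact: addr_ge0.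
    by rewrite ler_nat (leq_trans (max_card _)) ?card_ord.
  rewrite [leRHS](_ : _ = KR%:R * (KT%:R * (MT * F%:R) + KR%:R * (MR * F%:R))).
    by apply: ler_wpM2l => //; exact: lerD.
  by rewrite /S; ring.
Qed.

End PacketWeight.

Theorem lemma4 (R : realFieldType) (KT KR N F : nat) (MT MR : R) :
  (0 < KT)%N -> (0 < KR)%N -> (0 < F)%N -> (KR <= N)%N ->
  0 <= MT -> 0 <= MR -> MR <= N%:R ->
  forall (P : 'I_KT -> {set packet N F}) (Q : 'I_KR -> {set packet N F}),
    valid_caching P Q MT MR ->
    (KR%:R * N%:R * F%:R * (1 - MR / N%:R) ^+ 2) / (KT%:R * MT + KR%:R * MR)
    <= (perm_count N KR)%:R^-1 *
       \sum_(d in distinct_demands KR N) (Hstar P Q d)%:R.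
Proof.
move=> _ KR0 F0 KRN _ MR0 MRN P Q caching.
have P_cover := caching.1.
have Nnz : N%:R != 0 :> R by rewrite pnatr_eq0 -lt0n (leq_trans KR0).
set D := distinct_demands KR N.
have Dnz : #|D|%:R != 0 :> R.
  rewrite pnatr_eq0 -lt0n card_distinct_demands // /perm_count.
  by rewrite -ffact_factd // ffact_gt0.
rewrite -(card_distinct_demands KRN) -/D.
pose w := packet_weight R P Q.
apply: le_trans (_ : _ <= N%:R^-1 * \sum_p #|~: Rx_of Q p|%:R * w p) _.
  rewrite (_ : KR%:R * N%:R * F%:R * (1 - MR / N%:R) ^+ 2 =
              N%:R^-1 * (KR%:R * F%:R * (N%:R - MR) ^+ 2)); last first.
    by field; exact: Nnz.
  rewrite -(mulrA N%:R^-1); apply: ler_wpM2l; first by rewrite invr_ge0 ler0n.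
  exact: sum_weighted_complement_ge.
rewrite (_ : N%:R^-1 * _ = #|D|%:R^-1 * \sum_(d in D) \sum_(x in requests Q d) w x.1).
  apply: ler_wpM2l; first by rewrite invr_ge0 ler0n.
  by apply: ler_sum => d _; exact: requests_weight_le_Hstar.
by rewrite sum_requests_distinct_demands; field; rewrite Dnz Nnz.
Qed.
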